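(* Let $n\ge 1$. For $i,j\in\{1,\dots,n\}$ let $L_i>0$, $\mu_i>0$, $\theta_i\ge 0$, $\lambda_i\ge 0$ and $\gamma_{ij}\ge 0$ be real numbers with $\gamma_{ii}=0$ and $\gamma_{ij}=\gamma_{ji}$. Let $A$ be the $n\times n$ matrix with $A_{ii}=-\big(\frac{\mu_i}{L_i}+\theta_i+\sum_{j=1}^n\frac{\gamma_{ij}}{L_i}\big)$ and $A_{ij}=\frac{\gamma_{ij}}{L_j}$ for $i\ne j$, and $b\in\mathbb{R}^n$ with $b_i=\mu_i-\lambda_i$. Let $y(t)=(y_1(t),\dots,y_n(t))^t$ be the solution of $y'(t)=Ay(t)+b$ and $y^*=-A^{-1}b=(y_1^*,\dots,y_n^* )^t$ its equilibrium point. Put $$L_a=\sum_{i=1}^nL_i,\quad \mu_a=\sum_{i=1}^n\mu_i,\quad \lambda_a=\sum_{i=1}^n\lambda_i,\quad \bar\theta=\frac1n\sum_{i=1}^n\theta_i,$$ let $y_a(t)$ be the solution of the scalar equation $y_a'(t)=-\big(\frac{\mu_a}{L_a}+\bar\theta\big)y_a(t)+(\mu_a-\lambda_a)$, and let $y_a^*=\frac{\mu_a-\lambda_a}{\mu_a/L_a+\bar\theta}$ be its equilibrium value. If $$\frac{\mu_1}{L_1}=\frac{\mu_2}{L_2}=\cdots=\frac{\mu_n}{L_n}\quad\text{and}\quad \theta_1=\cdots=\theta_n,$$ then $\sum_{i=1}^n y_i^*=y_a^*$. Furthermore, if in addition $\sum_{i=1}^n y_i(0)=y_a(0)$, then $\sum_{i=1}^n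 y_i(t)=y_a(t)$ for all $t\ge 0$.
   Context: The vector system models the inventory levels of $n$ warehouses in one echelon with maximum levels $L_i$, maximum supply rates $\mu_i$, deterioration percentages $\theta_i$, demand rates $\lambda_i$ and maximum lateral transshipment rates $\gamma_{ij}$; the scalar equation is the aggregated model in which the $n$ warehouses are combined into one warehouse. The matrix $A$ is invertible (all its eigenvalues have negative real part). *)

From HB Require Import structures.
From mathcomp Require Import all_boot all_order all_algebra.
From mathcomp Require Import all_classical all_reals all_analysis.
Set Implicit Arguments. Unset Strict Implicit. Unset Printing Implicit Defensive.
Import Order.TTheory GRing.Theory Num.Theory.
Local Open Scope ring_scope.

Section Model.
Variables (R : realType) (n : nat).
Variables (L mu theta lam : 'I_n -> R) (gam : 'I_n -> 'I_n -> R).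

Definition sysA : 'M[R]_n :=
  \matrix_(i, j) if i == j
                 then - (mu i / L i + theta i + \sum_(k < n) gam i k / L i)
                 else gam i j / L j.

Definition sysb : 'cV[R]_n := \col_i (mu i - lam i).

Definition ystar : 'cV[R]_n := - (invmx sysA *m sysb).

Definition L_a : R := \sum_(i < n) L i.
Definition mu_a : R := \sum_(i < n) mu i.
Definition lam_a : R := \sum_(i < n) lam i.
Definition theta_bar : R := n%:R^-1 * \sum_(i < n) theta i.

Definition agg_rate : R := mu_a / L_a + theta_bar.
Definition ya_star : R := (mu_a - lam_a) / agg_rate.
End Model.

From HB Require Import structures.
From mathcomp Require Import all_boot all_order all_algebra.
From mathcomp Require Import all_classical all_reals all_analysis.
From mathcomp Require Import ring.
Import Order.TTheory GRing.Theory Num.Theory.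
Local Open Scope ring_scope.

(* The off-diagonal entry gamma_ij / L_j of column j is exactly what the
   diagonal entry of column i loses, so by symmetry of gamma every column of
   A sums to -(mu_j / L_j + theta_j): transshipment only moves stock around.
   When these column sums all equal a common -r, summing y' = A y + b over
   the warehouses gives the scalar equation S' = -r S + (mu_a - lambda_a),
   and r is precisely the aggregated rate mu_a / L_a + theta_bar.  The claim
   for the equilibria follows from summing A y* = -b, the one for the
   trajectories from uniqueness for the scalar linear equation. *)

Lemma sum_mulmx_col {R : pzRingType} {n : nat} (A : 'M[R]_n) (v : 'cV[R]_n) :
  \sum_i (A *m v) i 0 = \sum_j (\sum_i A i j) * v j 0.
Proof.
under eq_bigr do rewrite mxE.
by rewrite exchange_big; apply: eq_bigr => j _; rewrite mulr_suml.
Qed.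

Lemma linear_ode_expR_invariant {R : realType} {r : R} {D : R -> R} :
  (forall t, is_derive t (1 : R) D (- r * D t)) ->
  forall t, D t * expR (r * t) = D 0.
Proof.
move=> HD t.
pose g := (D * (expR \o (r \*: id)))%R.
have g'0 x : is_derive x (1 : R) g 0.
  have He := is_derive1_comp (is_derive_expR ((r \*: id) x))
                             (is_deriveZ r (is_derive_id x 1)).
  apply: is_derive_eq (is_deriveM (HD x) He) _.
  rewrite /= /GRing.scale /=; ring.
have -> : D t * expR (r * t) = D 0 * expR (r * 0).
  exact: is_derive_0_is_cst t 0 g'0.
by rewrite mulr0 expR0 mulr1.
Qed.

Lemma linear_ode_unique {R : realType} {r c : R} {f g : R -> R} :
  (forall t, is_derive t (1 : R) f (- r * f t + c)) ->
  (forall t, is_derive t (1 : R) g (- r * g t + c)) ->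
  f 0 = g 0 -> forall t, f t = g t.
Proof.
move=> Hf Hg fg0 t.
have HD s : is_derive s (1 : R) (f - g) (- r * (f - g) s).
  apply: is_derive_eq (is_deriveB (Hf s) (Hg s)) _; rewrite !fctE; ring.
have := linear_ode_expR_invariant HD t.
rewrite !fctE fg0 subrr => /eqP; rewrite mulf_eq0 expR_eq0 orbF subr_eq0.
by move/eqP.
Qed.

Section AggregatedModel.
Context {R : realType} {n : nat}.
Context {L mu theta lam : 'I_n -> R} {gam : 'I_n -> 'I_n -> R}.
Hypothesis gam_diag0 : forall i, gam i i = 0.
Hypothesis gam_sym : forall i j, gam i j = gam j i.

Local Notation A := (sysA L mu theta gam).
Local Notation b := (sysb mu lam).

Lemma sysA_col_sum j : \sum_i A i j = - (mu j / L j + theta j).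
Proof.
rewrite (bigD1 j) //= mxE eqxx.
have -> : \sum_(i | i != j) A i j = \sum_k gam j k / L j.
  rewrite [RHS](bigD1 j) //= gam_diag0 mul0r add0r.
  by apply: eq_bigr => i /negPf neq_ij; rewrite mxE neq_ij gam_sym.
ring.
Qed.

Lemma sysb_sum : \sum_i b i 0 = mu_a mu - lam_a lam.
Proof. by rewrite /mu_a /lam_a -sumrB; apply: eq_bigr => i _; rewrite mxE. Qed.

Context {r : R}.
Hypothesis uniform_rate : forall j, mu j / L j + theta j = r.

Lemma sum_sysA_mul (v : 'cV[R]_n) : \sum_i (A *m v) i 0 = - r * \sum_i v i 0.
Proof.
rewrite sum_mulmx_col mulr_sumr; apply: eq_bigr => j _.
by rewrite sysA_col_sum uniform_rate mulNr.
Qed.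

Lemma ystar_sum : A \in unitmx -> r != 0 ->
  \sum_i ystar L mu theta lam gam i 0 = (mu_a mu - lam_a lam) / r.
Proof.
move=> A_unit r_neq0.
have Aystar : A *m ystar L mu theta lam gam = - b.
  by rewrite /ystar mulmxN mulmxA mulmxV // mul1mx.
have := sum_sysA_mul (ystar L mu theta lam gam).
rewrite Aystar; under eq_bigr do rewrite mxE.
rewrite sumrN sysb_sum => sum_eq.
apply: (mulIf r_neq0); rewrite divfK //; apply: oppr_inj.
by rewrite sum_eq mulNr mulrC.
Qed.

Lemma is_derive_sum_sol {y : R -> 'cV[R]_n} :
  (forall t i, is_derive t (1 : R) (fun s => y s i 0) ((A *m y t + b) i 0)) ->
  forall t, is_derive t (1 : R) (fun s => \sum_i y s i 0)
                      (- r * \sum_i y t i 0 + (mu_a mu - lam_a lam)).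
Proof.
move=> Hy t.
have -> : (fun s => \sum_i y s i 0) = \sum_i (fun s => y s i 0).
  by apply/funext => s; rewrite fct_sumE.
apply: is_derive_eq (is_derive_sum (fun i => Hy t i)) _.
under eq_bigr do rewrite mxE.
by rewrite big_split /= sum_sysA_mul sysb_sum.
Qed.

End AggregatedModel.

Lemma agg_rate_uniform {R : realType} {n : nat} {L mu theta : 'I_n -> R}
    {c th : R} :
  (0 < n)%N -> (forall i, 0 < L i) ->
  (forall i, mu i / L i = c) -> (forall i, theta i = th) ->
  agg_rate L mu theta = c + th.
Proof.
move=> n_gt0 L_gt0 mu_c theta_th.
have L_a_gt0 : 0 < L_a L.
  rewrite /L_a (bigD1 (Ordinal n_gt0)) //=; apply: ltr_pwDl => //.
  by apply: sumr_ge0 => i _; apply: ltW.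
rewrite /agg_rate /theta_bar.
have -> : mu_a mu = c * L_a L.
  rewrite /mu_a /L_a mulr_sumr; apply: eq_bigr => i _.
  by rewrite -(mu_c i) divfK // lt0r_neq0.
rewrite mulfK ?lt0r_neq0 //; congr (_ + _).
under eq_bigr do rewrite theta_th.
by rewrite sumr_const card_ord -[th *+ n]mulr_natr mulrCA mulVf ?mulr1 // pnatr_eq0 -lt0n.
Qed.

Theorem proposition4 (R : realType) (n : nat)
  (L mu theta lam : 'I_n -> R) (gam : 'I_n -> 'I_n -> R)
  (y : R -> 'cV[R]_n) (ya : R -> R) :
  (0 < n)%N ->
  (forall i, 0 < L i) -> (forall i, 0 < mu i) ->
  (forall i, 0 <= theta i) -> (forall i, 0 <= lam i) ->
  (forall i j, 0 <= gam i j) -> (forall i, gam i i = 0) ->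
  (forall i j, gam i j = gam j i) ->
  sysA L mu theta gam \in unitmx ->
  (forall (t : R) (i : 'I_n), is_derive t (1 : R) (fun s => y s i 0)
                 ((sysA L mu theta gam *m y t + sysb mu lam) i 0)) ->
  (forall t : R, is_derive t (1 : R) ya
                 (- agg_rate L mu theta * ya t + (mu_a mu - lam_a lam))) ->
  (forall i j, mu i / L i = mu j / L j) ->
  (forall i j, theta i = theta j) ->
  (\sum_(i < n) ystar L mu theta lam gam i 0 = ya_star L mu theta lam)
  /\ (\sum_(i < n) y 0 i 0 = ya 0 ->
      forall t, 0 <= t -> \sum_(i < n) y t i 0 = ya t).
Proof.
move=> n_gt0 L_gt0 mu_gt0 theta_ge0 _ _ gam_diag0 gam_sym A_unit Hy Hya
  mu_L_eq theta_eq.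
pose i0 := Ordinal n_gt0.
pose r := mu i0 / L i0 + theta i0.
have uniform_rate j : mu j / L j + theta j = r.
  by rewrite /r (mu_L_eq j i0) (theta_eq j i0).
have r_gt0 : 0 < r by apply: ltr_wpDr => //; apply: divr_gt0.
have agg_rate_r : agg_rate L mu theta = r.
  exact: agg_rate_uniform n_gt0 L_gt0 (fun i => mu_L_eq i i0) (fun i => theta_eq i i0).
split.
  rewrite /ya_star agg_rate_r.
  by rewrite (ystar_sum gam_diag0 gam_sym uniform_rate A_unit (lt0r_neq0 r_gt0)).
move=> sum_y0 t _.
rewrite agg_rate_r in Hya.
exact: linear_ode_unique (is_derive_sum_sol gam_diag0 gam_sym uniform_rate Hy) Hya sum_y0 t.
Qed.
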